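(* Let $G$ be an infinite, connected, countable, locally finite $d$-regular graph equipped with a random labeling. Then with probability $1$ the following holds: for every $n\in\mathbb{N}$ there are infinitely many pairs $(v,\ell)$, with $v$ a vertex and $\ell\in\{1,\dots,d\}$ a port, such that the basic walk starting at $v$ with initial port $\ell$ visits (at least) $n$ distinct vertices.
   Context: Each undirected edge $\{v,w\}$ is regarded as two arcs $v\to w$ and $w\to v$. A labeling assigns, at each vertex $v$, the port numbers $1,\dots,d$ bijectively to the $d$ arcs leaving $v$ (labels on $v\to w$ and $w\to v$ need not agree). In a random labeling these bijections are chosen uniformly at random, independently for different vertices. Given a labeling, a starting vertex $v_0$ and an initial port $\ell$, the basic walk leaves $v_0$ along the arc labeled $\ell$; thereafter, whenever it enters a vertex $v$ along an arc whose label is $i$, it leaves $v$ along the arc out of $v$ labeled $(i \bmod d)+1$. *)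

From mathcomp Require Import all_boot all_order all_algebra.
Set Implicit Arguments. Unset Strict Implicit. Unset Printing Implicit Defensive.
Import Order.TTheory GRing.Theory Num.Theory.
Local Open Scope ring_scope.

Definition simple_graph (V : countType) (adj : rel V) : Prop :=
  (forall v w, adj v w = adj w v) /\ (forall v, ~~ adj v v).

Definition regular_graph (V : countType) (adj : rel V) (d : nat) : Prop :=
  forall v, exists s : seq V, [/\ uniq s, size s = d & forall w, adj v w = (w \in s)].

Definition connected_graph (V : countType) (adj : rel V) : Prop :=
  forall v w : V, exists p : seq V, path adj v p /\ last v p = w.

Definition infinite_type (V : countType) : Prop :=
  forall s : seq V, exists v : V, v \notin s.

(* A labeling: at each vertex v, port i : 'I_d (port i+1 in 1-based numbering)
   is the arc v -> lab v i; lab v must be a bijection from ports onto the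
   neighbours of v. *)
Definition labeling (V : countType) (adj : rel V) (d : nat)
  (lab : V -> 'I_d -> V) : Prop :=
  forall v, injective (lab v) /\ (forall w, adj v w <-> exists i, lab v i = w).

(* Basic walk: states (current vertex, port along which it leaves).  Entering
   a vertex along an arc labeled i (0-based), it leaves along port (i+1) mod d,
   i.e. ordS i, which is the 0-based version of (i mod d)+1. *)
Fixpoint basic_walk (V : countType) (d : nat) (lab : V -> 'I_d -> V)
  (v0 : V) (l : 'I_d) (k : nat) : V * 'I_d :=
  match k with
  | 0 => (v0, l)
  | k'.+1 => let s := basic_walk lab v0 l k' in (lab s.1 s.2, ordS s.2)
  end.

Definition visits_at_least (V : countType) (d : nat) (lab : V -> 'I_d -> V)
  (v0 : V) (l : 'I_d) (n : nat) : Prop :=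
  exists k, (n <= size (undup [seq (basic_walk lab v0 l j).1 | j <- iota 0 k]))%N.

(* Cylinder sets of the random labeling: a finite list of (vertex, bijection)
   constraints on distinct vertices. *)
Definition in_cylinder (V : countType) (d : nat) (lab : V -> 'I_d -> V)
  (c : seq (V * {ffun 'I_d -> V})) : Prop :=
  forall p, p \in c -> forall i, lab p.1 i = p.2 i.

(* probability of a cylinder (with distinct, admissible constraints) under the
   random labeling: each vertex's bijection is uniform among the d! bijections,
   independently, so a cylinder constraining c vertices has probability
   (1/d!)^c.  (Constraints by non-admissible maps give empty cylinders, for
   which this weight is only an overestimate; such cylinders are useless in
   covers, so nullness below is unaffected.) *)
Definition cyl_weight (V : countType) (d : nat) (c : seq (V * {ffun 'I_d -> V})) : rat :=
  ((d`!)%:R^-1 : rat) ^+ size c.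

(* "E holds with probability 1 for the random labeling": the set of labelings
   violating E has outer measure 0 for the product (random-labeling) measure,
   i.e. for every eps > 0 it is covered by countably many cylinders of total
   probability <= eps. *)
Definition almost_surely (V : countType) (adj : rel V) (d : nat)
  (E : (V -> 'I_d -> V) -> Prop) : Prop :=
  forall eps : rat, 0 < eps ->
  exists C : nat -> seq (V * {ffun 'I_d -> V}),
    [/\ forall k, uniq (map fst (C k)),
        forall lab, labeling adj lab -> ~ E lab -> exists k, in_cylinder lab (C k)
      & forall m, \sum_(k < m) cyl_weight (C k) <= eps].

From Stdlib Require Import Classical ClassicalEpsilon.
From mathcomp Require Import all_boot all_order all_algebra fingroup perm.
From mathcomp Require Import zify ring lra.
Set Implicit Arguments. Unset Strict Implicit. Unset Printing Implicit Defensive.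
Import Order.TTheory GRing.Theory Num.Theory.

(* Fix n and a finite set X of vertices.  Since G is infinite, connected and
   locally finite, it contains any number K of simple paths of length n + 1
   starting outside X whose vertices, final vertices excepted, are pairwise
   distinct: walk down a geodesic from a vertex far away from X.  On each
   such path one choice of the port bijections at its vertices forces the
   basic walk to follow the path, hence to visit n + 2 vertices; it has
   probability (1/d!)^(n+1), independently for the K paths.  So the labelings
   under which no walk started outside X visits n vertices have probability
   at most (1 - (1/d!)^(n+1))^K for every K, i.e. zero, and a countable union
   over the pairs (n, X) of such null events is null. *)

Section FarPaths.
Variables (V : countType) (adj : rel V) (N : V -> seq V).
Hypothesis adjC : symmetric adj.
Hypothesis adj_N : forall v w, adj v w = (w \in N v).
Hypothesis adj_connected : connected_graph adj.
Hypothesis V_infinite : infinite_type V.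

Fixpoint ball (o : V) r :=
  if r is r'.+1 then ball o r' ++ flatten (map N (ball o r')) else [:: o].

Lemma sub_ball o r r' : r <= r' -> {subset ball o r <= ball o r'}.
Proof.
move=> /subnK <-; elim: (r' - r) => //= k IH x /IH.
by rewrite /= mem_cat => ->.
Qed.

Lemma ball_adj o r x y : x \in ball o r -> adj x y -> y \in ball o r.+1.
Proof.
move=> Hx Hxy; rewrite /= mem_cat; apply/orP; right.
by apply/flatten_mapP; exists x; rewrite -?adj_N.
Qed.

Lemma ball_path o p : forall r x,
  x \in ball o r -> path adj x p -> last x p \in ball o (r + size p).
Proof.
elim: p => [|y p IH] r x Hx /=; first by rewrite addn0.
by case/andP=> Hxy Hp; rewrite addnS -addSn; apply: IH (ball_adj Hx Hxy) Hp.
Qed.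

Lemma exists_ball o v : exists r, v \in ball o r.
Proof.
have [p [Hp <-]] := adj_connected o v; exists (0 + size p).
by apply: ball_path; rewrite ?mem_head.
Qed.

Definition dist o v := ex_minn (exists_ball o v).

Lemma dist_ball o v : v \in ball o (dist o v).
Proof. by rewrite /dist; case: ex_minnP. Qed.

Lemma dist_le o v r : v \in ball o r -> dist o v <= r.
Proof. by rewrite /dist; case: ex_minnP => m _ H /H. Qed.

Lemma dist_adj o v w : adj v w -> dist o w <= (dist o v).+1.
Proof. by move=> Hvw; apply/dist_le/(ball_adj (dist_ball o v)). Qed.

Lemma dist_predS o v m : dist o v = m.+1 -> exists2 w, adj v w & dist o w = m.
Proof.
move=> Hd; have := dist_ball o v; rewrite Hd /= mem_cat => /orP [H|].
  by have := dist_le H; rewrite Hd ltnn.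
case/flatten_mapP => w Hw; rewrite -adj_N => Hwv; exists w; first by rewrite adjC.
by apply/eqP; rewrite eqn_leq dist_le //= -ltnS -Hd dist_adj.
Qed.

Definition closer o x y := adj x y && ((dist o y).+1 == dist o x).

Lemma exists_closer_path o k v :
  k <= dist o v -> exists2 t, size t = k & path (closer o) v t.
Proof.
elim: k v => [|k IH] v Hk; first by exists [::].
have [w Hvw Hw] := dist_predS (esym (ltn_predK Hk)).
have [t Ht Hp] : exists2 t, size t = k & path (closer o) w t.
  by apply: IH; rewrite Hw -ltnS (ltn_predK Hk).
by exists (w :: t); rewrite /= ?Ht // Hp /closer Hvw Hw (ltn_predK Hk) eqxx.
Qed.

Lemma closer_path_uniq o v t : path (closer o) v t -> uniq (v :: t).
Proof.
move=> Hp; apply: (@sorted_uniq _ (fun x y => dist o y < dist o x)).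
- by move=> y x z /= H1 H2; apply: ltn_trans H2 H1.
- by move=> x /=; rewrite ltnn.
- by apply: sub_path Hp => x y /andP [_ /eqP <-].
Qed.

Lemma closer_path_dist o v t :
  path (closer o) v t -> all (fun x => dist o v - size t <= dist o x) (v :: t).
Proof.
elim: t v => [|y t IH] v /=; first by rewrite subn0 leqnn.
case/andP=> /andP [_ /eqP Hy] /IH /= /andP [H1 H2]; rewrite leq_subr /=.
apply/andP; split; first by move: H1; lia.
by apply: sub_all H2 => x /=; lia.
Qed.

Lemma far_simple_path (X : seq V) m : exists x t,
  [/\ size t = m, path adj x t, uniq (x :: t) & all [predC X] (x :: t)].
Proof.
have [o _] := V_infinite [::].
pose R := \max_(y <- X) dist o y.
have [v Hv] := V_infinite (ball o (R + m)).
have Hdv : R + m < dist o v.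
  by rewrite ltnNge; apply: contra Hv => /sub_ball; apply; apply: dist_ball.
have [t Ht Hp] := exists_closer_path (leq_trans (leq_addl R m) (ltnW Hdv)).
exists v, t; split => //; first by apply: sub_path Hp => x y /andP [].
  exact: closer_path_uniq Hp.
apply: sub_all (closer_path_dist Hp) => y /= Hy; apply/negP => HX.
have := @leq_bigmax_seq _ X xpredT (dist o) y HX isT; rewrite -/R.
by move: Hy; rewrite Ht; lia.
Qed.

Lemma disjoint_far_paths (X : seq V) n K : exists xts : seq (V * seq V),
  [/\ size xts = K,
      forall xt, xt \in xts ->
        [/\ size xt.2 = n.+1, path adj xt.1 xt.2, uniq (xt.1 :: xt.2) & xt.1 \notin X]
    & uniq (flatten [seq belast xt.1 xt.2 | xt <- xts])].
Proof.
elim: K => [|K [xts [Hs Hxts Hu]]]; first by exists [::].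
have [x [t [Ht Hp Hxt Hall]]] :=
  far_simple_path (X ++ flatten [seq belast xt.1 xt.2 | xt <- xts]) n.+1.
exists ((x, t) :: xts); split => /=; first by rewrite Hs.
  move=> xt; rewrite inE => /orP [/eqP -> /=|/Hxts //]; split => //.
  by move: Hall => /andP [/= + _]; rewrite mem_cat negb_or => /andP [].
rewrite cat_uniq Hu andbT; apply/andP; split.
  by move: Hxt; rewrite lastI rcons_uniq => /andP [].
apply/hasPn => y Hy; apply/negP => /mem_belast /(allP Hall) /=.
by rewrite mem_cat Hy orbT.
Qed.

Lemma one_lt_degree d : (forall v, uniq (N v)) -> (forall v, size (N v) = d) -> 1 < d.
Proof.
move=> N_uniq size_N.
have [x [t [Ht Hp Hu _]]] := far_simple_path [::] 2.
case: t Ht Hp Hu => [|y [|z [|]]] //= _ /and3P [Hxy Hyz _].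
rewrite !inE !negb_or => /and3P [/andP [_ Hxz] _ _].
rewrite -(size_N y); apply: (@uniq_leq_size _ [:: x; z]); first by rewrite /= inE Hxz.
by move=> w; rewrite !inE => /orP [] /eqP ->; rewrite -adj_N // adjC.
Qed.

End FarPaths.

Section Cylinders.
Variables (V : countType) (d : nat) (N : V -> seq V).
Hypothesis N_uniq : forall v, uniq (N v).
Hypothesis size_N : forall v, size (N v) = d.

Definition cylinder := seq (V * {ffun 'I_d -> V}).

Definition port_map v (s : {perm 'I_d}) : {ffun 'I_d -> V} :=
  [ffun i => nth v (N v) (s i)].

Lemma port_map_inj v : injective (port_map v).
Proof.
move=> s s' /ffunP Hss'; apply/permP => i; apply/val_inj/eqP.
by have := Hss' i; rewrite !ffunE => /eqP; rewrite nth_uniq ?size_N.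
Qed.

Definition cylinder_of (f : V -> {ffun 'I_d -> V}) (ws : seq V) : cylinder :=
  [seq (w, f w) | w <- ws].

Definition configs (ws : seq V) : seq cylinder :=
  foldr (fun w cs => [seq (w, port_map w s) :: c | s <- enum {perm 'I_d}, c <- cs])
    [:: [::]] ws.

Lemma mem_configs f ws :
  (forall w, exists s, f w = port_map w s) -> cylinder_of f ws \in configs ws.
Proof.
move=> f_port; elim: ws => [|w ws IH] /=; first by rewrite mem_seq1.
have [s ->] := f_port w.
by apply: (allpairs_f (fun s c => (w, port_map w s) :: c)); rewrite ?mem_enum.
Qed.

Lemma configs_fst ws c : c \in configs ws -> map fst c = ws.
Proof.
elim: ws c => [|w ws IH] c /=; first by rewrite mem_seq1 => /eqP ->.
by case/allpairsP => [[s c'] [_ /= /IH <- ->]].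
Qed.

Lemma configs_neq ws g : 1 < d -> ws != [::] -> g \in configs ws ->
  exists2 c, c \in configs ws & c != g.
Proof.
case: ws => [|w ws] // d_gt1 _ /allpairsP [[s c] [_ /= Hc ->]].
have d_gt0 : 0 < d by apply: ltnW.
pose s' := (tperm (Ordinal d_gt0) (Ordinal d_gt1) * s)%g.
exists ((w, port_map w s') :: c).
  by apply: (allpairs_f (fun s c => (w, port_map w s) :: c)); rewrite ?mem_enum.
apply/negP => /eqP [/port_map_inj /permP /(_ (Ordinal d_gt0))].
by rewrite permM tpermL => /perm_inj /eqP; rewrite -val_eqE.
Qed.

Definition avoiding (bs : seq (seq V * cylinder)) : seq cylinder :=
  foldr (fun b cs => [seq c1 ++ c2 | c1 <- [seq c <- configs b.1 | c != b.2], c2 <- cs])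
    [:: [::]] bs.

Lemma avoiding_fst bs c : c \in avoiding bs -> map fst c = flatten (map fst bs).
Proof.
elim: bs c => [|b bs IH] c /=; first by rewrite mem_seq1 => /eqP ->.
case/allpairsP => [[c1 c2] [/= + /IH <- ->]]; rewrite map_cat mem_filter.
by case/andP=> _ /configs_fst ->.
Qed.

Lemma mem_avoiding f bs : (forall w, exists s, f w = port_map w s) ->
  (forall b, b \in bs -> cylinder_of f b.1 != b.2) ->
  cylinder_of f (flatten (map fst bs)) \in avoiding bs.
Proof.
move=> f_port; elim: bs => [|b bs IH] Hbs /=; first by rewrite mem_seq1.
rewrite /cylinder_of map_cat; apply: (allpairs_f (fun c1 c2 => c1 ++ c2)).
  by rewrite mem_filter mem_configs ?Hbs ?mem_head.
by apply: IH => b' Hb'; rewrite Hbs // inE Hb' orbT.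
Qed.

Lemma avoiding_neq0 bs : 1 < d ->
  (forall b, b \in bs -> b.1 != [::] /\ b.2 \in configs b.1) -> avoiding bs != [::].
Proof.
move=> d_gt1; elim: bs => [|b bs IH] Hbs //=.
have [c Hc Hcb] := configs_neq d_gt1 (Hbs b (mem_head _ _)).1 (Hbs b (mem_head _ _)).2.
have := IH (fun b' Hb' => Hbs b' ltac:(by rewrite inE Hb' orbT)).
case: (avoiding bs) => [|c' cs] // _; apply/eqP => Hnil.
suff : c ++ c' \in [::] by [].
rewrite -Hnil; apply: (allpairs_f (fun c1 c2 => c1 ++ c2)); last exact: mem_head.
by rewrite mem_filter Hcb.
Qed.

Local Open Scope ring_scope.

Definition vertex_weight : rat := (d`!%:R)^-1.

Lemma vertex_weight_ge0 : 0 <= vertex_weight.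
Proof. by rewrite invr_ge0 ler0n. Qed.

Lemma vertex_weight_le1 : vertex_weight <= 1.
Proof. by rewrite invf_le1 ?ltr0n ?fact_gt0 // ler1n fact_gt0. Qed.

Lemma cyl_weight_ge0 (c : cylinder) : 0 <= cyl_weight c.
Proof. exact/exprn_ge0/vertex_weight_ge0. Qed.

Lemma cyl_weight_cat (c1 c2 : cylinder) :
  cyl_weight (c1 ++ c2) = cyl_weight c1 * cyl_weight c2.
Proof. by rewrite /cyl_weight size_cat exprD. Qed.

Lemma sum_configs ws : \sum_(c <- configs ws) cyl_weight c = 1.
Proof.
elim: ws => [|w ws IH] /=; first by rewrite big_seq1 /cyl_weight expr0.
rewrite big_allpairs_dep (eq_bigr (fun=> vertex_weight)) => [|s _]; last first.
  rewrite -[RHS]mulr1 -IH mulr_sumr.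
  by apply: eq_bigr => c _; rewrite /cyl_weight /= exprS.
by rewrite big_enum sumr_const card_Sn -mulr_natr mulVf // pnatr_eq0 -lt0n fact_gt0.
Qed.

Lemma sum_configs_neq ws g : g \in configs ws ->
  \sum_(c <- configs ws | c != g) cyl_weight c <= 1 - vertex_weight ^+ size ws.
Proof.
move=> Hg; rewrite -(sum_configs ws) !(perm_big _ (perm_to_rem Hg)) !big_cons eqxx /=.
rewrite {2}/cyl_weight -(configs_fst Hg) size_map addrC addrK.
by rewrite [leRHS](bigID (fun c => c != g)) lerDl sumr_ge0 // => c _; apply: cyl_weight_ge0.
Qed.

Lemma sum_avoiding bs m :
  (forall b, b \in bs -> size b.1 = m /\ b.2 \in configs b.1) ->
  \sum_(c <- avoiding bs) cyl_weight c <= (1 - vertex_weight ^+ m) ^+ size bs.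
Proof.
elim: bs => [|b bs IH] Hbs /=; first by rewrite big_seq1 /cyl_weight !expr0.
have [Hm Hb] := Hbs b (mem_head _ _).
have IHbs := IH (fun b' Hb' => Hbs b' ltac:(by rewrite inE Hb' orbT)).
have a_ge0 : 0 <= 1 - vertex_weight ^+ m.
  by rewrite subr_ge0 exprn_ile1 ?vertex_weight_ge0 ?vertex_weight_le1.
rewrite big_allpairs_dep /= big_filter.
apply: (@le_trans _ _ (\sum_(c1 <- configs b.1 | c1 != b.2)
          cyl_weight c1 * (1 - vertex_weight ^+ m) ^+ size bs)).
  apply: ler_sum => c1 _; under eq_bigr do rewrite cyl_weight_cat.
  by rewrite -mulr_sumr; exact: (ler_wpM2l (cyl_weight_ge0 c1) IHbs).
rewrite -big_distrl /= exprS; apply: ler_wpM2r; first exact: exprn_ge0.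
by rewrite -Hm; apply: sum_configs_neq.
Qed.

End Cylinders.

Section Estimates.
Local Open Scope ring_scope.
Variable R : archiRealFieldType.

Lemma bernoulli_le1 (a : R) K : 0 <= a -> a <= 1 -> (1 - a) ^+ K * (1 + K%:R * a) <= 1.
Proof.
move=> a_ge0 a_le1; elim: K => [|K IH]; first by rewrite expr0 mul0r addr0 mulr1.
rewrite exprSr -mulrA; apply: le_trans IH; apply: ler_wpM2l.
  by rewrite exprn_ge0 ?subr_ge0.
have K_ge0 := ler0n R K; have : 0 <= (K%:R + 1) * (a * a) by rewrite !mulr_ge0 ?addr_ge0.
by rewrite -natr1; nra.
Qed.

Lemma exists_expr_le (a e : R) : 0 < a -> a <= 1 -> 0 < e -> exists K, (1 - a) ^+ K <= e.
Proof.
move=> a_gt0 a_le1 e_gt0; set K := Num.bound (a * e)^-1; exists K.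
have : (a * e)^-1 < K%:R by apply: archi_boundP; rewrite invr_ge0 mulr_ge0 // ltW.
rewrite -[X in X < _]mul1r ltr_pdivrMr ?mulr_gt0 // => Kae_gt1.
have := bernoulli_le1 K (ltW a_gt0) a_le1.
have : 0 <= (1 - a) ^+ K by rewrite exprn_ge0 ?subr_ge0.
move: ((1 - a) ^+ K) => P P_ge0 HP.
have : P <= P * (e * (1 + K%:R * a)) by rewrite ler_peMr //; nra.
nra.
Qed.

Lemma sum_halvings (e : R) M : \sum_(k < M) e / 2 ^+ k.+1 = e - e / 2 ^+ M.
Proof.
elim: M => [|M IH]; first by rewrite big_ord0 expr0 divr1 subrr.
rewrite big_ord_recr /= IH !exprS.
have : (2 : R) ^+ M != 0 by rewrite expf_neq0 // pnatr_eq0.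
by move=> ?; field.
Qed.

End Estimates.

Section Enumeration.
Variables (T : Type) (L : nat -> seq T).

Lemma flatten_mkseqD a c :
  flatten (mkseq L (a + c)) = flatten (mkseq L a) ++ flatten (mkseq (fun j => L (a + j)) c).
Proof.
by rewrite /mkseq iotaD map_cat flatten_cat add0n -[a in iota a c]addn0 iotaDl -map_comp.
Qed.

Lemma size_flatten_mkseq j : (forall k, 0 < size (L k)) -> j <= size (flatten (mkseq L j)).
Proof.
move=> L_neq0; elim: j => [|j IH] //; rewrite -addn1 flatten_mkseqD size_cat /= cats0.
by move: IH (L_neq0 (j + 0)); lia.
Qed.

Lemma nth_flatten_mkseq x0 a b i : a <= b -> i < size (flatten (mkseq L a)) ->
  nth x0 (flatten (mkseq L a)) i = nth x0 (flatten (mkseq L b)) i.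
Proof. by move=> /subnKC <- Hi; rewrite flatten_mkseqD nth_cat Hi. Qed.

End Enumeration.

Section Walks.
Variables (V : countType) (d : nat) (lab : V -> 'I_d -> V).

Definition follows x t (p0 : 'I_d) :=
  forall i, i < size t -> lab (nth x (x :: t) i) (iter i (@ordS d) p0) = nth x t i.

Lemma basic_walk_follows x t p0 : follows x t p0 ->
  forall i, i <= size t -> basic_walk lab x p0 i = (nth x (x :: t) i, iter i (@ordS d) p0).
Proof. by move=> Hf; elim => [|i IH] Hi //=; rewrite IH ?(ltnW Hi) //= Hf. Qed.

Lemma follows_visits x t p0 : follows x t p0 -> uniq (x :: t) ->
  visits_at_least lab x p0 (size t).+1.
Proof.
move=> Hf Hu; exists (size t).+1.
have -> : [seq (basic_walk lab x p0 j).1 | j <- iota 0 (size t).+1] = x :: t.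
  rewrite -[RHS](mkseq_nth x); apply/eq_in_map => j; rewrite mem_iota /= add0n => Hj.
  by rewrite (basic_walk_follows Hf).
by rewrite undup_id.
Qed.

End Walks.

Section WalkConfigs.
Variables (V : countType) (adj : rel V) (d : nat) (N : V -> seq V).
Hypothesis N_uniq : forall v, uniq (N v).
Hypothesis size_N : forall v, size (N v) = d.
Hypothesis adj_N : forall v w, adj v w = (w \in N v).
Variable p0 : 'I_d.

(* At the i-th vertex w of x :: t, swap the port by which the walk started at
   (x, p0) leaves w with the port leading to the next vertex of t. *)
Definition walk_perm x t w : {perm 'I_d} :=
  let i := index w (x :: t) in
  tperm (iter i (@ordS d) p0) (insubd p0 (index (nth x t i) (N w))).

Definition walk_config x t : cylinder V d :=
  cylinder_of (fun w => port_map N w (walk_perm x t w)) (belast x t).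

Lemma follows_walk_perm x t : path adj x t -> uniq (x :: t) ->
  follows (fun w i => port_map N w (walk_perm x t w) i) x t p0.
Proof.
move=> Hp Hu i Hi; set w := nth x (x :: t) i.
have Hwi : index w (x :: t) = i by rewrite index_uniq //= ltnW.
have Hnext : nth x t i \in N w by rewrite -adj_N; apply: (pathP x Hp).
rewrite ffunE /walk_perm Hwi tpermL insubdK ?nth_index //.
by rewrite unfold_in /= -(size_N w) index_mem.
Qed.

Lemma walk_config_visits (lab : V -> 'I_d -> V) x t :
  path adj x t -> uniq (x :: t) ->
  cylinder_of (fun w => [ffun i => lab w i]) (belast x t) = walk_config x t ->
  visits_at_least lab x p0 (size t).+1.
Proof.
move=> Hp Hu /eq_in_map Hlab; apply: follows_visits (Hu) => i Hi.
have Hw : nth x (x :: t) i \in belast x t.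
  by rewrite lastI nth_rcons size_belast Hi mem_nth ?size_belast.
have := Hlab _ Hw => -[] /ffunP /(_ (iter i (@ordS d) p0)); rewrite ffunE => ->.
exact: (follows_walk_perm Hp Hu Hi).
Qed.

End WalkConfigs.

Lemma labeling_port_map (V : countType) (adj : rel V) d (N : V -> seq V) lab :
  (forall v, size (N v) = d) -> (forall v w, adj v w = (w \in N v)) ->
  labeling adj lab ->
  forall v, exists s : {perm 'I_d}, [ffun i => lab v i] = port_map N v s.
Proof.
move=> size_N adj_N Hlab v; have [lab_inj lab_adj] := Hlab v.
have lab_N i : lab v i \in N v by rewrite -adj_N; apply/lab_adj; exists i.
have index_lt i : index (lab v i) (N v) < d by rewrite -(size_N v) index_mem.
have f_inj : injective (fun i => Ordinal (index_lt i)).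
  move=> i j /(congr1 val) /= Hij; apply: lab_inj.
  by rewrite -(nth_index v (lab_N i)) Hij nth_index.
by exists (perm f_inj); apply/ffunP => i; rewrite !ffunE permE /= nth_index.
Qed.

Section Covers.
Variables (V : countType) (adj : rel V) (d : nat).
Local Open Scope ring_scope.

Definition cylinder_cover (B : (V -> 'I_d -> V) -> Prop) (L : seq (cylinder V d))
    (e : rat) :=
  [/\ L != [::], {in L, forall c, uniq (map fst c)},
      forall lab, labeling adj lab -> B lab -> exists2 c, c \in L & in_cylinder lab c
    & \sum_(c <- L) cyl_weight c <= e].

Lemma almost_surely_of_covers (E : (V -> 'I_d -> V) -> Prop)
    (B : nat -> (V -> 'I_d -> V) -> Prop) :
  (forall lab, labeling adj lab -> ~ E lab -> exists k, B k lab) ->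
  (forall k e, 0 < e -> exists L, cylinder_cover (B k) L e) -> almost_surely adj E.
Proof.
move=> E_bad B_cover eps eps_gt0.
have [Lk HLk] : exists Lk, forall k, cylinder_cover (B k) (Lk k) (eps / 2 ^+ k.+1).
  apply: (ClassicalEpsilon.choice (fun k L => cylinder_cover (B k) L (eps / 2 ^+ k.+1))) => k.
  by apply: B_cover; rewrite divr_gt0 ?exprn_gt0.
(* The m-th cylinder is the m-th one of Lk 0 ++ Lk 1 ++ ..., which already
   occurs in Lk 0 ++ ... ++ Lk m since no Lk k is empty. *)
pose F M := flatten (mkseq Lk M).
have Lk_neq0 k : (0 < size (Lk k))%N by have [] := HLk k; rewrite lt0n size_eq0.
have F_nth i M : (i < M)%N -> nth [::] (F i.+1) i = nth [::] (F M) i.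
  by move=> Hi; apply: nth_flatten_mkseq (size_flatten_mkseq _ Lk_neq0).
exists (fun m => nth [::] (F m.+1) m); split.
- move=> m; case: (ltnP m (size (F m.+1))) => [Hm|]; last by move/(nth_default [::]) ->.
  have /flatten_mapP [k _ Hk] := mem_nth [::] Hm.
  by have [_ Hu _ _] := HLk k; apply: Hu.
- move=> lab Hlab /(E_bad _ Hlab) [k Hk].
  have [_ _ Hcov _] := HLk k; have [c Hc Hin] := Hcov lab Hlab Hk.
  have HcF : c \in F k.+1.
    by rewrite /F /mkseq; apply/flatten_mapP; exists k; rewrite // mem_iota add0n ltnSn.
  exists (index c (F k.+1)); set i := index c (F k.+1).
  rewrite (F_nth i (maxn i.+1 k.+1)) ?leq_maxl //.
  by rewrite -(@nth_flatten_mkseq _ Lk [::] k.+1) ?leq_maxr ?index_mem // nth_index.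
- move=> M; under eq_bigr => m _ do rewrite (F_nth m M) //.
  apply: (@le_trans _ _ (\sum_(c <- F M) cyl_weight c)).
    rewrite [leRHS](big_nth [::]) big_mkord.
    rewrite (big_ord_widen _ (fun m => cyl_weight (nth [::] (F M) m))
               (size_flatten_mkseq M Lk_neq0)).
    rewrite [leRHS](bigID (fun m : 'I__ => (m < M)%N)) lerDl sumr_ge0 // => m _.
    exact: cyl_weight_ge0.
  apply: (@le_trans _ _ (\sum_(k < M) eps / 2 ^+ k.+1)); last first.
    by rewrite sum_halvings gerBl divr_ge0 ?exprn_ge0 // ltW.
  rewrite /F /mkseq big_flatten /= big_map -(big_mkord xpredT (fun k => eps / 2 ^+ k.+1)).
  by rewrite /index_iota subn0; apply: ler_sum => k _; have [_ _ _ ->] := HLk k.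
Qed.

End Covers.

Section ShortWalks.
Variables (V : countType) (adj : rel V) (d : nat) (N : V -> seq V).
Hypothesis adjC : symmetric adj.
Hypothesis N_uniq : forall v, uniq (N v).
Hypothesis size_N : forall v, size (N v) = d.
Hypothesis adj_N : forall v w, adj v w = (w \in N v).
Hypothesis adj_connected : connected_graph adj.
Hypothesis V_infinite : infinite_type V.

Definition short_walks_outside (lab : V -> 'I_d -> V) n (X : seq V) :=
  forall p : V * 'I_d, p.1 \notin X -> ~ visits_at_least lab p.1 p.2 n.

Lemma short_walks_outside_cover n X e : (0 < e)%R ->
  exists L, cylinder_cover adj (fun lab => short_walks_outside lab n X) L e.
Proof.
move=> e_gt0; have d_gt1 := one_lt_degree adjC adj_N adj_connected V_infinite N_uniq size_N.
pose p0 := Ordinal (ltnW d_gt1).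
have [K HK] : exists K, ((1 - vertex_weight d ^+ n.+1) ^+ K <= e)%R.
  apply: exists_expr_le e_gt0; first by rewrite exprn_gt0 // invr_gt0 ltr0n fact_gt0.
  by rewrite exprn_ile1 ?vertex_weight_ge0 ?vertex_weight_le1.
have [xts [size_xts Hxts uniq_xts]] :=
  disjoint_far_paths adjC adj_N adj_connected V_infinite X n K.
pose bs := [seq (belast xt.1 xt.2, walk_config N p0 xt.1 xt.2) | xt <- xts].
have Hbs b : b \in bs -> size b.1 = n.+1 /\ b.2 \in configs d N b.1.
  case/mapP => xt /Hxts [Ht _ _ _] -> /=; rewrite size_belast Ht; split=> //.
  by apply: mem_configs => w; exists (walk_perm N p0 xt.1 xt.2 w).
exists (avoiding N bs); split.
- by apply: (avoiding_neq0 N_uniq size_N d_gt1) => b /Hbs [Hb ->]; rewrite -size_eq0 Hb.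
- by move=> c /avoiding_fst ->; rewrite -map_comp.
- move=> lab Hlab Hshort.
  exists (cylinder_of (fun w => [ffun i => lab w i]) (flatten (map fst bs))).
    apply: mem_avoiding (labeling_port_map size_N adj_N Hlab) _ => _ /mapP [xt Hxt ->] /=.
    have [Ht Hp Hu HX] := Hxts xt Hxt.
    apply/eqP => /(walk_config_visits size_N adj_N Hp Hu); rewrite Ht => -[k Hk].
    by apply: (Hshort (xt.1, p0) HX); exists k; apply: leq_trans (leqW (leqnSn n)) Hk.
  by move=> _ /mapP [w _ ->] i; rewrite ffunE.
- apply: le_trans HK; have -> : K = size bs by rewrite size_map.
  exact: sum_avoiding.
Qed.

End ShortWalks.

Theorem proposition4p5 (V : countType) (adj : rel V) (d : nat) :
  simple_graph adj -> regular_graph adj d -> connected_graph adj ->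
  infinite_type V ->
  almost_surely adj (fun lab : V -> 'I_d -> V =>
    forall n : nat, forall s : seq (V * 'I_d), exists p : V * 'I_d,
      p \notin s /\ visits_at_least lab p.1 p.2 n).
Proof.
move=> [adjC _] regular adj_connected V_infinite.
have [N HN] := ClassicalEpsilon.choice _ regular.
have N_uniq v : uniq (N v) by case: (HN v).
have size_N v : size (N v) = d by case: (HN v).
have adj_N v w : adj v w = (w \in N v) by case: (HN v).
pose B k (lab : V -> 'I_d -> V) :=
  let nX := odflt (0, [::]) (unpickle k) in short_walks_outside lab nX.1 nX.2.
apply: (@almost_surely_of_covers _ _ _ _ B) => [lab _ Hbad|k e e_gt0].
  have [n /not_all_ex_not [s Hs]] := not_all_ex_not _ _ Hbad.
  exists (pickle (n, map fst s)); rewrite /B pickleK => p Hp Hvisit; apply: Hs.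
  by exists p; split=> //; apply: contra Hp => /(map_f fst).
exact: short_walks_outside_cover.
Qed.
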